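(* Let $n\ge1$. The number of symmetric Brauer diagrams on $2n$ strands equals $a_{2n}$, where $a_0=a_1=1$ and $a_m=a_{m-1}+2(m-1)a_{m-2}$ for $m>1$. Consequently, $\mathrm{SBr}(\mathrm{A}_{2n-1})$ is a $\mathbb{Z}[\delta^{\pm1}]$-subalgebra of $\mathrm{Br}(\mathrm{A}_{2n-1})$, free over $\mathbb{Z}[\delta^{\pm1}]$ of rank $a_{2n}$.
   Context: $\mathrm{Br}(\mathrm{A}_{2n-1})$ denotes the classical Brauer algebra on $2n$ strands over $\mathbb{Z}[\delta^{\pm1}]$: it is free with basis the Brauer diagrams, i.e. perfect matchings of the $4n$ dots $(j,1),(j,0)$, $1\le j\le 2n$, with multiplication by concatenation where each closed loop formed is replaced by a factor $\delta$. A Brauer diagram is symmetric if it is invariant under the reflection $(j,\epsilon)\mapsto(2n+1-j,\epsilon)$ of the dots. $\mathrm{SBr}(\mathrm{A}_{2n-1})$ is the $\mathbb{Z}[\delta^{\pm1}]$-linear span of the symmetric Brauer diagrams. *)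

From HB Require Import structures.
From mathcomp Require Import all_boot all_order all_algebra.
Set Implicit Arguments. Unset Strict Implicit. Unset Printing Implicit Defensive.
Import GRing.Theory.

(* Dots on N strands: (j, eps) with j : 'I_N (0-based, j = 0 is strand 1)
   and eps = true for the top row (j,1), false for the bottom row (j,0). *)
Definition dot (N : nat) := ('I_N * bool)%type.

(* A raw map on dots; Brauer diagrams are those that are perfect matchings,
   i.e. fixed-point-free involutions (x is matched with d x). *)
Definition diagram (N : nat) := {ffun dot N -> dot N}.

Definition is_brauer N (d : diagram N) : bool :=
  [forall x, (d (d x) == x) && (d x != x)].

(* The reflection (j, eps) |-> (N+1-j, eps) (1-based), i.e. rev_ord. *)
Definition refl_dot N (x : dot N) : dot N := (rev_ord x.1, x.2).

Definition is_symmetric N (d : diagram N) : bool :=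
  [forall x, d (refl_dot x) == refl_dot (d x)].

Definition is_sym_brauer N (d : diagram N) := is_brauer d && is_symmetric d.

Fixpoint a (m : nat) : nat :=
  match m with
  | 0 | 1 => 1
  | S ((S p) as q) => a q + 2 * q * a p
  end.

(* Concatenation d1 . d2 : d1 on top of d2; bottom dot (k,0) of d1 is
   identified with top dot (k,1) of d2.  The top row of the result is the
   top row of d1, the bottom row is the bottom row of d2. *)
(* walk N d1 d2 fuel y : y is a dot of d1 just reached; follow the strand. *)
Fixpoint walk N (d1 d2 : diagram N) (fuel : nat) (y : dot N) : dot N :=
  if y.2 then y
  else match fuel with
       | 0 => y
       | S f => let z := d2 (y.1, true) in
                if ~~ z.2 then z else walk d1 d2 f (d1 (z.1, false))
       end.

Definition conc N (d1 d2 : diagram N) : diagram N :=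
  [ffun x : dot N =>
     if x.2 then walk d1 d2 N.+1 (d1 x)
     else let z := d2 x in
          if ~~ z.2 then z else walk d1 d2 N.+1 (d1 (z.1, false))].

(* Closed loops: components of the middle row (identified points k) which
   contain no point connected to the top of d1 or the bottom of d2. *)
Definition mid_rel N (d1 d2 : diagram N) : rel 'I_N :=
  fun k k' => (d1 (k, false) == (k', false)) || (d2 (k, true) == (k', true)).

Definition mid_open N (d1 d2 : diagram N) (k : 'I_N) : bool :=
  (d1 (k, false)).2 || ~~ (d2 (k, true)).2.

Definition loops N (d1 d2 : diagram N) : nat :=
  #|[set k : 'I_N | (fingraph.root (mid_rel d1 d2) k == k) &&
        [forall k', connect (mid_rel d1 d2) k k' ==> ~~ mid_open d1 d2 k']]|.

(* Elements of Br(A_{N-1}) over R: coefficient functions on diagrams,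
   supported on Brauer diagrams (the basis). *)
Notation elt R N := {ffun diagram N -> (GRing.ComUnitRing.sort R)^o}.

Definition inBr (R : comUnitRingType) N (f : elt R N) : bool :=
  [forall d, (f d != 0%R) ==> is_brauer d].

Definition inSBr (R : comUnitRingType) N (f : elt R N) : bool :=
  [forall d, (f d != 0%R) ==> is_sym_brauer d].

Definition bmul (R : comUnitRingType) (delta : R) N (f g : elt R N) : elt R N :=
  [ffun d => (\sum_(d1 | is_brauer d1) \sum_(d2 | is_brauer d2)
      (conc d1 d2 == d)%:R * (f d1 * g d2) * delta ^+ loops d1 d2)%R].

Definition id_diag N : diagram N := [ffun x : dot N => (x.1, ~~ x.2)].

Definition bone (R : comUnitRingType) N : elt R N :=
  [ffun d => ((d == id_diag N)%:R)%R].

From HB Require Import structures.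
From mathcomp Require Import all_boot all_order all_algebra.
From mathcomp Require Import zify.
Import GRing.Theory.
Set Implicit Arguments. Unset Strict Implicit. Unset Printing Implicit Defensive.

(* For a fixed-point-free involution D and an involution E of a
      finite set, following a strand from a fixed point e of E (alternately
      applying D and E) ends at another fixed point [traverse e], and
      [traverse] is a fixed-point-free involution of the fixed points of E.
      Concatenation of two Brauer diagrams is such a traversal through the
      two stacked diagrams, so it is again a Brauer diagram; it commutes with
      the reflection, so symmetric diagrams are closed under concatenation.
   2. Counting.  Symmetric perfect matchings of a reflection-stable set of
      2m points number a m: the partner of a fixed point x is either its
      mirror image s x or one of 2m - 2 other points y, and removing the
      block {x, s x, y, s y} leaves a set of 2m - 2 or 2m - 4 points.
   3. Algebra. *)

Fixpoint first_fixed (A : eqType) (h E : A -> A) (fuel : nat) (x : A) : A :=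
  if E x == x then x else if fuel is f.+1 then first_fixed h E f (h x) else x.

Lemma first_fixed_iter (A : eqType) (h E : A -> A) fuel x t :
  (forall j, j < t -> E (iter j h x) != iter j h x) ->
  E (iter t h x) = iter t h x -> t <= fuel -> first_fixed h E fuel x = iter t h x.
Proof.
elim: t fuel x => [|t IH] [|fuel] x //= moving stop le_t.
- by rewrite stop eqxx.
- by rewrite /= stop eqxx.
rewrite (negbTE (moving 0 isT)) -iterS iterSr; apply: IH => //.
- by move=> j lt_jt; rewrite -iterSr; apply: moving.
- by rewrite -iterSr.
Qed.

(* D is a fixed-point-free involution (a
   perfect matching) and E an involution whose fixed points are the "outer"
   points.  The strand starting at an outer point e alternately follows D and
   E; it stops at the first outer point reached, [traverse e]. *)
Section Strands.

Variables (A : finType) (D E : A -> A).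
Hypotheses (DK : involutive D) (EK : involutive E).

Definition strand (e : A) (t : nat) : A := iter t (D \o E) (D e).

Definition stops (e : A) (t : nat) : bool := E (strand e t) == strand e t.

Lemma strandS e t : strand e t.+1 = D (E (strand e t)).
Proof. by []. Qed.

(* The number of non-outer points bounds the length of every strand. *)
Definition inner_count : nat := #|[pred x | E x != x]|.

Lemma strand_rev e t i : i <= t -> strand (strand e t) i = D (strand e (t - i)).
Proof.
elim: i => [|i IH] lt_it; first by rewrite subn0.
rewrite strandS IH; last exact: ltnW.
have -> : t - i = (t - i.+1).+1 by lia.
by rewrite strandS DK EK.
Qed.

Lemma strand_uniq e m : E e = e -> (forall j, j < m -> ~~ stops e j) ->
  forall i j, i < j < m -> strand e i != strand e j.
Proof.
move=> Ee moving; elim=> [|i IH] [|j] //= lt_jm.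
- apply/eqP => /(can_inj DK) /(congr1 E); rewrite EK Ee => e_j.
  by have := moving j (ltnW lt_jm); rewrite /stops -e_j Ee eqxx.
- have : strand e i != strand e j by apply: IH; lia.
  by rewrite (inj_eq (can_inj DK)) (inj_eq (can_inj EK)).
Qed.

Lemma strand_length e m : E e = e -> (forall j, j < m -> ~~ stops e j) ->
  m <= inner_count.
Proof.
move=> Ee moving; pose g (i : 'I_m) := strand e i.
have inj_g : injective g.
  move=> i j; rewrite /g => eq_ij; apply/val_inj/eqP.
  case: (ltngtP i j) => // lt_ij.
  - by have := strand_uniq Ee moving (i := i) (j := j); rewrite lt_ij ltn_ord eq_ij eqxx; apply.
  - by have := strand_uniq Ee moving (i := j) (j := i); rewrite lt_ij ltn_ord eq_ij eqxx; apply.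
rewrite -[m]card_ord -(card_image inj_g); apply: subset_leq_card.
by apply/subsetP => _ /imageP[i _ ->]; rewrite inE; apply: moving.
Qed.

Lemma strand_stops e : E e = e ->
  exists t, [/\ t <= inner_count, forall j, j < t -> ~~ stops e j & stops e t].
Proof.
move=> Ee; have ex_stop : exists t, stops e t.
  case: (boolP [exists t : 'I_inner_count.+1, stops e t]) => [/existsP[t] | no_stop].
    by exists t.
  suff : inner_count.+1 <= inner_count by rewrite ltnn.
  by apply: (strand_length Ee) => j lt_j; move/existsPn: no_stop => /(_ (Ordinal lt_j)).
case: (ex_minnP ex_stop) => t stop_t min_t.
have moving j : j < t -> ~~ stops e j.
  by move=> lt_jt; apply/negP => /min_t; rewrite leqNgt lt_jt.
by exists t; split => //; apply: (strand_length Ee).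
Qed.

Definition traverse (e : A) : A := first_fixed (D \o E) E inner_count (D e).

Lemma first_fixed_strand e t fuel : (forall j, j < t -> ~~ stops e j) ->
  stops e t -> t <= fuel -> first_fixed (D \o E) E fuel (D e) = strand e t.
Proof. by move=> moving /eqP stop le_t; apply: first_fixed_iter. Qed.

Lemma traverse_spec e : E e = e ->
  exists t, [/\ t <= inner_count, forall j, j < t -> ~~ stops e j, stops e t &
    forall fuel, inner_count <= fuel -> first_fixed (D \o E) E fuel (D e) = strand e t].
Proof.
move=> Ee; have [t [le_t moving stop]] := strand_stops Ee.
by exists t; split=> // fuel le_fuel; apply: first_fixed_strand (leq_trans le_t le_fuel).
Qed.

Lemma traverse_outer e : E e = e -> E (traverse e) = traverse e.
Proof.
by move=> /traverse_spec[t [_ _ /eqP stop eq_t]]; rewrite /traverse eq_t.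
Qed.

Lemma traverse_fuel e fuel : E e = e -> inner_count <= fuel ->
  first_fixed (D \o E) E fuel (D e) = traverse e.
Proof.
by move=> /traverse_spec[t [_ _ _ eq_t]] le_fuel; rewrite /traverse (eq_t _ le_fuel) eq_t.
Qed.

Lemma strand_back e t j : j < t -> strand (strand e t) j = E (strand e (t - j.+1)).
Proof.
move=> lt_jt; rewrite strand_rev; last exact: ltnW.
have -> : t - j = (t - j.+1).+1 by lia.
by rewrite strandS DK.
Qed.

Lemma traverseK e : E e = e -> traverse (traverse e) = e.
Proof.
move=> Ee; have [t [le_t moving stop eq_t]] := traverse_spec Ee.
have back_start : strand (strand e t) t = e by rewrite strand_rev // subnn /= DK.
rewrite /traverse (eq_t _ (leqnn _)) (first_fixed_strand (t := t)) ?back_start //.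
- move=> j lt_jt; rewrite /stops strand_back // EK eq_sym.
  by apply: moving; lia.
- by rewrite /stops back_start Ee.
Qed.

(* Since D has no fixed point, a strand never ends where it started: its
   middle would be a fixed point of D (even length) or of E (odd length). *)
Lemma traverse_neq (D_fpf : forall x, D x != x) e : E e = e -> traverse e != e.
Proof.
move=> Ee; have [t [_ moving _ eq_t]] := traverse_spec Ee.
rewrite /traverse (eq_t _ (leqnn _)); apply/eqP => loop.
have mirror i : i <= t -> strand e i = D (strand e (t - i)).
  by move=> le_it; have := strand_rev e le_it; rewrite loop.
have := odd_double_half t; set k := t./2; case: (odd t) => /= t_eq.
- have stop_k : E (strand e k) = strand e k.
    apply: (can_inj DK); rewrite -strandS mirror; last by lia.
    by rewrite (_ : t - k.+1 = k) //; lia.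
  have lt_kt : k < t by lia.
  by case/negP: (moving k lt_kt); rewrite /stops stop_k.
- have fix_k : strand e k = D (strand e k).
    have le_kt : k <= t by lia.
    by have := mirror k le_kt; rewrite (_ : t - k = k) //; lia.
  by have := D_fpf (strand e k); rewrite -fix_k eqxx.
Qed.

End Strands.

(* The dots of d1 and of d2 are placed
   side by side in [dot N + dot N]; [layers d1 d2] matches them by d1 and d2,
   and [middle] identifies the bottom row of d1 with the top row of d2.  The
   outer dots, fixed by [middle], are the top row of d1 and the bottom row of
   d2, i.e. the dots of the concatenation. *)
Definition layers N (d1 d2 : diagram N) (x : dot N + dot N) : dot N + dot N :=
  match x with inl y => inl (d1 y) | inr y => inr (d2 y) end.

Definition middle N (x : dot N + dot N) : dot N + dot N :=
  match x with
  | inl y => if y.2 then x else inr (y.1, true)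
  | inr y => if y.2 then inl (y.1, false) else x
  end.

Definition to_stack N (y : dot N) : dot N + dot N := if y.2 then inl y else inr y.

Definition of_stack N (x : dot N + dot N) : dot N :=
  match x with inl y | inr y => y end.

Lemma middleK N : involutive (@middle N).
Proof. by case=> [[k []]|[k []]]. Qed.

Lemma middle_to_stack N (y : dot N) : middle (to_stack y) = to_stack y.
Proof. by case: y => k []. Qed.

Lemma to_of_stack N (x : dot N + dot N) : middle x = x -> to_stack (of_stack x) = x.
Proof. by case: x => [[k []]|[k []]]. Qed.

Lemma of_to_stack N (y : dot N) : of_stack (to_stack y) = y.
Proof. by case: y => k []. Qed.

Lemma inner_count_middle N : inner_count (@middle N) <= N.*2.
Proof.
pose g (u : 'I_N + 'I_N) : dot N + dot N :=
  match u with inl k => inl (k, false) | inr k => inr (k, true) end.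
have inj_g : injective g by case=> k [] // k' [->].
have -> : N.*2 = #|{: 'I_N + 'I_N}| by rewrite card_sum card_ord addnn.
rewrite -(card_image inj_g).
apply: subset_leq_card; apply/subsetP => -[[k []]|[k []]]; rewrite inE /= ?eqxx // => _.
- by apply/imageP; exists (inl k).
- by apply/imageP; exists (inr k).
Qed.

Lemma brauerP N (d : diagram N) : is_brauer d -> involutive d /\ forall x, d x != x.
Proof. by move/forallP=> br; split=> x; have /andP[/eqP ? ?] := br x. Qed.

Lemma layers_brauer N (d1 d2 : diagram N) : is_brauer d1 -> is_brauer d2 ->
  involutive (layers d1 d2) /\ forall x, layers d1 d2 x != x.
Proof.
move=> /brauerP[K1 fpf1] /brauerP[K2 fpf2]; split.
- by case=> y /=; rewrite ?K1 ?K2.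
- by case=> y; rewrite /= inj_eq ?(fpf1 y) ?(fpf2 y) //; [apply: inl_inj | apply: inr_inj].
Qed.

(* [walk] performs two steps of the strand search per unit of fuel. *)
Lemma walk_first_fixed N (d1 d2 : diagram N) fuel y :
  walk d1 d2 fuel y =
  of_stack (first_fixed (layers d1 d2 \o @middle N) (@middle N) fuel.*2 (inl y)).
Proof.
elim: fuel y => [|fuel IH] [k []] /=; rewrite ?eqxx //.
by case: (d2 (k, true)) => kz [] /=; rewrite ?eqxx.
Qed.

Lemma symmetricP N (d : diagram N) :
  is_symmetric d -> forall x, d (refl_dot x) = refl_dot (d x).
Proof. by move/forallP => sym x; apply/eqP. Qed.

Lemma walk_refl N (d1 d2 : diagram N) : is_symmetric d1 -> is_symmetric d2 ->
  forall fuel y, walk d1 d2 fuel (refl_dot y) = refl_dot (walk d1 d2 fuel y).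
Proof.
move=> /symmetricP sym1 /symmetricP sym2; elim=> [|fuel IH] [k []] //=.
rewrite -[(rev_ord k, true)]/(refl_dot (k, true)) sym2.
case: (d2 (k, true)) => kz [] //=.
by rewrite -[(rev_ord kz, false)]/(refl_dot (kz, false)) sym1 IH.
Qed.

(* From now on walks are handled only through the two lemmas above. *)
Arguments walk : simpl never.

Lemma conc_traverse N (d1 d2 : diagram N) : is_brauer d1 -> is_brauer d2 ->
  forall y, conc d1 d2 y = of_stack (traverse (layers d1 d2) (@middle N) (to_stack y)).
Proof.
move=> br1 br2 [k b]; have [K _] := layers_brauer br1 br2.
have traverseE m : (N.+1).*2 <= m ->
    traverse (layers d1 d2) (@middle N) (to_stack (k, b)) =
    first_fixed (layers d1 d2 \o @middle N) (@middle N) m (layers d1 d2 (to_stack (k, b))).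
  move=> le_m; rewrite (traverse_fuel K (@middleK N) (middle_to_stack _)) //.
  by apply: leq_trans (inner_count_middle N) _; lia.
case: b traverseE => traverseE; rewrite ffunE.
- by rewrite (traverseE _ (leqnn _)) walk_first_fixed.
- rewrite (traverseE (N.+1).*2.+1); last by lia.
  rewrite /=; case: (d2 (k, false)) => kz [] /=.
  + by rewrite walk_first_fixed.
  + by rewrite /= eqxx.
Qed.

Lemma conc_brauer N (d1 d2 : diagram N) : is_brauer d1 -> is_brauer d2 ->
  is_brauer (conc d1 d2).
Proof.
move=> br1 br2; have [K fpf] := layers_brauer br1 br2.
apply/forallP => y; have outer := middle_to_stack y.
have end_outer := traverse_outer K (@middleK N) outer.
rewrite !conc_traverse // to_of_stack // (traverseK K (@middleK N) outer) of_to_stack eqxx /=.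
apply: contra (traverse_neq K (@middleK N) fpf outer) => /eqP eq_y.
by rewrite -(to_of_stack end_outer) eq_y.
Qed.

Lemma conc_symmetric N (d1 d2 : diagram N) : is_symmetric d1 -> is_symmetric d2 ->
  is_symmetric (conc d1 d2).
Proof.
move=> sym1 sym2; have s1 := symmetricP sym1; have s2 := symmetricP sym2.
apply/forallP => -[k []]; apply/eqP; rewrite !ffunE /=.
- by rewrite s1 walk_refl.
- rewrite s2; case: (d2 (k, false)) => kz [] //=.
  by rewrite -[(rev_ord kz, false)]/(refl_dot (kz, false)) s1 walk_refl.
Qed.

Lemma conc_sym_brauer N (d1 d2 : diagram N) : is_sym_brauer d1 -> is_sym_brauer d2 ->
  is_sym_brauer (conc d1 d2).
Proof.
move=> /andP[br1 sym1] /andP[br2 sym2].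
by rewrite /is_sym_brauer conc_brauer ?conc_symmetric.
Qed.

(* A symmetric matching of an s-stable set
   S is a fixed-point-free involution of S commuting with s, extended by the
   identity outside S.  Matching a chosen x in S either with s x or with one
   of the |S| - 2 other points y (which also forces s x -- s y) leaves a
   symmetric matching of S minus 2 or 4 points, whence the recursion of [a]. *)
Section SymmetricMatchings.

Variables (T : finType) (s : T -> T).
Hypotheses (sK : involutive s) (s_fpf : forall z, s z != z).

Definition sym_matching (S : {set T}) (d : {ffun T -> T}) : bool :=
  [forall z, if z \in S then [&& d z \in S, d (d z) == z, d z != z & d (s z) == s (d z)]
             else d z == z].

Definition sym_matchings (S : {set T}) : {set {ffun T -> T}} := [set d | sym_matching S d].

Lemma sym_matchingP (S : {set T}) (d : {ffun T -> T}) :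
  reflect (forall z, if z \in S then [/\ d z \in S, d (d z) = z, d z != z & d (s z) = s (d z)]
                     else d z = z)
          (sym_matching S d).
Proof.
apply: (iffP forallP) => dP z; move: (dP z); case: (z \in S).
- by case/and4P => ? /eqP ? ? /eqP ?.
- by move/eqP.
- by case=> ? -> ? ->; rewrite !eqxx; apply/and4P.
- by move->.
Qed.

Definition block (x y : T) : {set T} := x |: (s x |: (y |: [set s y])).

Lemma in_block x y z : (z \in block x y) = [|| z == x, z == s x, z == y | z == s y].
Proof. by rewrite !inE. Qed.

Definition block_match (x y : T) : {ffun T -> T} :=
  [ffun z => if z == x then y else if z == y then x else if z == s x then s y else s x].

Lemma block_matchE x y : y != x -> [/\ block_match x y x = y, block_match x y y = x,
  block_match x y (s x) = s y & block_match x y (s y) = s x].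
Proof.
move=> ne_yx; rewrite !ffunE eqxx (negbTE ne_yx) eqxx (negbTE (s_fpf x)) eqxx.
rewrite (negbTE (s_fpf y)); split => //.
- by case: eqP => // <-; rewrite sK.
- case: eqP => [<-|_]; first by rewrite sK.
  by case: eqP => // /(can_inj sK) /eqP; rewrite (negbTE ne_yx).
Qed.

Lemma block_match_sym x y : y != x -> forall z, z \in block x y ->
  [/\ block_match x y z \in block x y, block_match x y (block_match x y z) = z,
      block_match x y z != z, block_match x y (s z) = s (block_match x y z)
    & s z \in block x y].
Proof.
move=> ne_yx z; have [p_x p_y p_sx p_sy] := block_matchE ne_yx.
have ne_xy : x != y by rewrite eq_sym.
have ne_sxy : s x != s y by rewrite (inj_eq (can_inj sK)).
have ne_syx : s y != s x by rewrite eq_sym.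
rewrite in_block => /or4P[] /eqP ->;
  by rewrite ?p_x ?p_y ?p_sx ?p_sy ?sK ?p_x ?p_y ?p_sx ?p_sy !in_block !eqxx ?orbT.
Qed.

Section Block.

Variables (S : {set T}) (x y : T).
Hypotheses (S_stable : forall z, (s z \in S) = (z \in S)).
Hypotheses (xS : x \in S) (yS : y \in S) (ne_yx : y != x).

Local Notation Q := (block x y).
Local Notation p := (block_match x y).

Lemma block_sub z : z \in Q -> z \in S.
Proof. by rewrite in_block => /or4P[] /eqP ->; rewrite ?S_stable. Qed.

Lemma block_compl_stable z : (s z \in S :\: Q) = (z \in S :\: Q).
Proof.
rewrite !in_setD S_stable; congr (~~ _ && _); apply/idP/idP => zQ.
- by have [_ _ _ _] := block_match_sym ne_yx zQ; rewrite sK.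
- by have [_ _ _ _ ->] := block_match_sym ne_yx zQ.
Qed.

Lemma card_block_compl : #|S :\: Q| + (if y == s x then 2 else 4) = #|S|.
Proof.
have QS : Q \subset S by apply/subsetP => z /block_sub.
rewrite -(cardsID Q S) (setIidPr QS) addnC; congr (_ + _).
have n1 : (x == s x) = false by rewrite eq_sym (negbTE (s_fpf x)).
have n2 : (s x == x) = false by rewrite (negbTE (s_fpf x)).
rewrite /block !cardsU1 cards1 !inE.
case: (y =P s x) => [->|ne]; first by rewrite sK eqxx n1 n2 eqxx.
have e1 : (x == y) = false by rewrite eq_sym (negbTE ne_yx).
have e2 : (x == s y) = false by apply/eqP => xy; apply: ne; rewrite xy sK.
have e3 : (s x == y) = false by apply/eqP => xy; apply: ne; rewrite xy.
have e4 : (s x == s y) = false by rewrite (inj_eq (can_inj sK)) eq_sym (negbTE ne_yx).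
have e5 : (y == s y) = false by rewrite eq_sym (negbTE (s_fpf y)).
by rewrite e1 e2 e3 e4 e5 n1.
Qed.

Definition glue_block (d : {ffun T -> T}) : {ffun T -> T} :=
  [ffun z => if z \in Q then p z else d z].

Lemma glue_blockE d z : glue_block d z = if z \in Q then p z else d z.
Proof. by rewrite ffunE. Qed.

Lemma glue_block_sym d : sym_matching (S :\: Q) d -> sym_matching S (glue_block d).
Proof.
move/sym_matchingP => dP; apply/sym_matchingP => z; rewrite !glue_blockE.
case: (boolP (z \in Q)) => zQ.
- have [pQ pp pne ps sQ] := block_match_sym ne_yx zQ.
  by rewrite block_sub // pQ pp sQ ps; split => //; apply: block_sub.
- move: (dP z); rewrite in_setD zQ /=; case: (boolP (z \in S)) => zS //.
  case=> /[dup] dzS; rewrite in_setD => /andP[dzQ dzS'] dd dne ds.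
  have szQ : s z \notin Q.
    by move: (block_compl_stable z); rewrite !in_setD zS zQ andbT => /andP[].
  by rewrite (negbTE dzQ) dd ds (negbTE szQ).
Qed.

Lemma sym_matching_block d : sym_matching S d -> d x = y -> {in Q, d =1 p}.
Proof.
move=> /sym_matchingP dP dx; have [p_x p_y p_sx p_sy] := block_matchE ne_yx.
have dy : d y = x by move: (dP x); rewrite xS => -[_ <- _ _]; rewrite dx.
have dsx : d (s x) = s y by move: (dP x); rewrite xS => -[_ _ _ ->]; rewrite dx.
have dsy : d (s y) = s x by move: (dP y); rewrite yS => -[_ _ _ ->]; rewrite dy.
by move=> z; rewrite in_block => /or4P[] /eqP ->; rewrite ?dx ?dy ?dsx ?dsy.
Qed.

Lemma restrict_block_sym d : sym_matching S d -> d x = y ->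
  sym_matching (S :\: Q) [ffun z => if z \in Q then z else d z].
Proof.
move=> dsym dx; have dQ := sym_matching_block dsym dx.
move/sym_matchingP: dsym => dP; apply/sym_matchingP => z; rewrite !ffunE in_setD.
case: (boolP (z \in Q)) => zQ //=.
move: (dP z); case: (boolP (z \in S)) => zS //= [dzS dd dne ds].
have dzQ : d z \notin Q.
  apply/negP => dzQ; have [pQ _ _ _ _] := block_match_sym ne_yx dzQ.
  by move: zQ; rewrite -dd dQ // pQ.
have szQ : s z \notin Q by move: (block_compl_stable z); rewrite !in_setD zS zQ andbT => /andP[].
by rewrite (negbTE dzQ) in_setD dzQ dzS dd ds (negbTE szQ).
Qed.

Lemma card_fiber : #|[set d in sym_matchings S | d x == y]| = #|sym_matchings (S :\: Q)|.
Proof.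
have -> : [set d in sym_matchings S | d x == y] = glue_block @: sym_matchings (S :\: Q).
  apply/setP => d; apply/idP/imsetP.
  - rewrite !inE => /andP[dsym /eqP dx].
    exists [ffun z => if z \in Q then z else d z]; first by rewrite inE restrict_block_sym.
    apply/ffunP => z; rewrite glue_blockE ffunE.
    by case: (boolP (z \in Q)) => // zQ; rewrite (sym_matching_block dsym dx).
  - case=> d' d'sym ->; rewrite !inE glue_block_sym /=; last by rewrite inE in d'sym.
    have xQ : x \in Q by rewrite in_block eqxx.
    by rewrite glue_blockE xQ; have [-> _ _ _] := block_matchE ne_yx; rewrite eqxx.
apply: card_in_imset => d1 d2; rewrite !inE => /sym_matchingP d1P /sym_matchingP d2P eq12.
apply/ffunP => z; case: (boolP (z \in Q)) => zQ.
- by move: (d1P z) (d2P z); rewrite in_setD zQ /= => -> ->.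
- by move/ffunP: eq12 => /(_ z); rewrite !glue_blockE (negbTE zQ).
Qed.

End Block.

Lemma card_sym_matchings_split (S : {set T}) x : x \in S ->
  #|sym_matchings S| = \sum_(y in S :\ x) #|[set d in sym_matchings S | d x == y]|.
Proof.
move=> xS; rewrite -sum1_card (partition_big (fun d : {ffun T -> T} => d x) (mem (S :\ x))).
- by apply: eq_bigr => y _; rewrite -sum1_card; apply: eq_bigl => d; rewrite !inE.
- move=> d; rewrite inE => /sym_matchingP /(_ x); rewrite xS => -[dS _ dne _].
  by rewrite !inE dne dS.
Qed.

Lemma card_sym_matchings m (S : {set T}) : (forall z, (s z \in S) = (z \in S)) ->
  #|S| = m.*2 -> #|sym_matchings S| = a m.
Proof.
elim/ltn_ind: m S => m IH S S_stable cardS.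
case: m IH cardS => [|k] IH cardS.
  have S0 : S = set0 by apply/eqP; rewrite -cards_eq0 cardS.
  have -> : sym_matchings S = [set [ffun z => z]].
    apply/setP => d; rewrite !inE S0; apply/sym_matchingP/eqP => [dP|->].
    - by apply/ffunP => z; rewrite ffunE; move: (dP z); rewrite inE.
    - by move=> z; rewrite inE ffunE.
  by rewrite cards1.
have [x xS] : exists x, x \in S by apply/card_gt0P; rewrite cardS.
have sxS : s x \in S :\ x by rewrite !inE s_fpf S_stable.
rewrite (card_sym_matchings_split xS) (bigD1 (s x)) //=.
have fiber y : y \in S -> y != x ->
    #|[set d in sym_matchings S | d x == y]| = a (if y == s x then k else k.-1).
  move=> yS ne_yx; set m := if y == s x then k else k.-1.
  rewrite card_fiber // (IH m _ _ (block_compl_stable S_stable ne_yx)) //.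
  - by rewrite /m; case: eqP; lia.
  - by rewrite /m; have := card_block_compl S_stable xS yS ne_yx; rewrite cardS; case: eqP; lia.
rewrite fiber ?S_stable ?s_fpf // eqxx (eq_bigr (fun _ => a k.-1)); last first.
  by move=> y; rewrite !inE => /andP[/andP[ne_yx yS] ne_ysx]; rewrite fiber // (negbTE ne_ysx).
rewrite (eq_bigl (mem (S :\ x :\ s x))); last by move=> y; rewrite !inE andbC.
rewrite sum_nat_const.
have -> : #|S :\ x :\ s x| = k.*2.
  by move: cardS; rewrite (cardsD1 x S) (cardsD1 (s x) (S :\ x)) xS sxS; lia.
by case: k {IH cardS fiber} => [|k] //; rewrite -mul2n.
Qed.

End SymmetricMatchings.

(* Symmetric Brauer diagrams are the symmetric matchings of all dots for the
   reflection, which has no fixed dot since the number of strands is even. *)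
Lemma card_sym_brauer n : #|[pred d : diagram n.*2 | is_sym_brauer d]| = a n.*2.
Proof.
have reflK : involutive (@refl_dot n.*2) by case=> k b; rewrite /refl_dot /= rev_ordK.
have refl_fpf (x : dot n.*2) : refl_dot x != x.
  case: x => k b; apply/eqP => -[] /(congr1 val) /=.
  have := ltn_ord k; have : n.*2 = (n * 2)%N by rewrite muln2.
  by lia.
have card_dots : #|[set: dot n.*2]| = (n.*2).*2.
  by rewrite cardsT card_prod card_ord card_bool muln2.
rewrite -(card_sym_matchings reflK refl_fpf (S := setT)) => [|z|//]; last by rewrite !inE.
apply: eq_card => d; rewrite !inE; apply/andP/sym_matchingP => [[/forallP br /forallP sym] z|dP].
- have /andP[/eqP dd dne] := br z.
  by rewrite !in_setT; split => //; apply/eqP.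
- split; apply/forallP => z; move: (dP z); rewrite in_setT => -[_ dd dne ds].
  + by rewrite dd eqxx dne.
  + by rewrite ds.
Qed.

Local Open Scope ring_scope.

Section SymmetricSubalgebra.

Variables (R : comUnitRingType) (N : nat).

Lemma inSBrP (f : elt R N) : inSBr f -> forall d, ~~ is_sym_brauer d -> f d = 0.
Proof. by move=> /forallP fS d; apply: contraNeq => /(implyP (fS d)). Qed.

Lemma SBr_sub_Br (f : elt R N) : inSBr f -> inBr f.
Proof.
move=> /forallP fS; apply/forallP => d; apply/implyP => /(implyP (fS d)).
by case/andP.
Qed.

Lemma id_sym_brauer : is_sym_brauer (id_diag N).
Proof.
apply/andP; split; apply/forallP => -[k b]; rewrite !ffunE //= negbK eqxx /=.
by apply/eqP => -[]; case: b.
Qed.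

Lemma SBr_one : inSBr (bone R N).
Proof.
apply/forallP => d; rewrite ffunE; apply/implyP.
by case: (d =P id_diag N) => [-> _ | _]; [apply: id_sym_brauer | rewrite eqxx].
Qed.

Lemma SBr_add (f g : elt R N) : inSBr f -> inSBr g -> inSBr (f + g).
Proof.
move=> fS gS; apply/forallP => d; apply/implyP; rewrite ffunE.
apply: contraNT => not_sym; apply/eqP.
by rewrite (inSBrP fS not_sym) (inSBrP gS not_sym) addr0.
Qed.

Lemma SBr_scale (c : R) (f : elt R N) : inSBr f -> inSBr (c *: f).
Proof.
move=> fS; apply/forallP => d; apply/implyP; rewrite ffunE.
by apply: contraNT => not_sym; apply/eqP; rewrite (inSBrP fS not_sym) scaler0.
Qed.

(* Only products of symmetric diagrams contribute, and these are symmetric. *)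
Lemma SBr_mul (delta : R) (f g : elt R N) : inSBr f -> inSBr g -> inSBr (bmul delta f g).
Proof.
move=> fS gS; apply/forallP => d; apply/implyP; rewrite ffunE.
apply: contraNT => not_sym; apply/eqP; rewrite big1 // => d1 _; rewrite big1 // => d2 _.
case: (boolP (is_sym_brauer d1)) => [sym1|/(inSBrP fS) ->]; last by rewrite mul0r mulr0 mul0r.
case: (boolP (is_sym_brauer d2)) => [sym2|/(inSBrP gS) ->]; last by rewrite !mulr0 mul0r.
case: eqP => [conc_d|_]; last by rewrite !mul0r.
by move: not_sym; rewrite -conc_d conc_sym_brauer.
Qed.

Lemma SBr_basis M : #|[pred d : diagram N | is_sym_brauer d]| = M ->
  exists b : 'I_M -> elt R N,
    [/\ (forall i, inSBr (b i)),
        (forall c : 'I_M -> R, \sum_i c i *: b i = 0 -> forall i, c i = 0)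
      & (forall f : elt R N, inSBr f -> exists c : 'I_M -> R, f = \sum_i c i *: b i)].
Proof.
move=> card_M; pose e (i : 'I_M) : diagram N := enum_val (cast_ord (esym card_M) i).
have e_inj : injective e by move=> i j /enum_val_inj /cast_ord_inj.
have e_sym i : is_sym_brauer (e i) by have := enum_valP (cast_ord (esym card_M) i).
have e_onto d : is_sym_brauer d -> exists i, d = e i.
  move=> d_sym; have d_in : d \in [pred d : diagram N | is_sym_brauer d] by [].
  exists (cast_ord card_M (enum_rank_in d_in d)).
  by rewrite /e cast_ordK enum_rankK_in.
pose b (i : 'I_M) : elt R N := [ffun d => ((d == e i)%:R : R)].
have coord (c : 'I_M -> R) j : (\sum_i c i *: b i) (e j) = c j.
  rewrite sum_ffunE (bigD1 j) //= big1 ?addr0 => [|i ne_ij]; rewrite !ffunE /=.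
  - by rewrite eqxx; exact: mulr1.
  - by rewrite (inj_eq e_inj) eq_sym (negbTE ne_ij) scaler0.
exists b; split.
- move=> i; apply/forallP => d; apply/implyP; rewrite ffunE.
  by case: (d =P e i) => [-> _ | _]; [apply: e_sym | rewrite eqxx].
- by move=> c sum0 i; rewrite -(coord c i) sum0 ffunE.
- move=> f fS; exists (fun i => f (e i)); apply/ffunP => d.
  case: (boolP (is_sym_brauer d)) => [/e_onto[i ->] | not_sym]; first by rewrite coord.
  rewrite (inSBrP fS not_sym) sum_ffunE big1 // => i _; rewrite !ffunE /=.
  by case: (d =P e i) => [d_ei | _]; [move: not_sym; rewrite d_ei e_sym | rewrite scaler0].
Qed.

End SymmetricSubalgebra.

Theorem mainTheorem2 (n : nat) (Hn : (1 <= n)%N) :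
  #|[pred d : diagram n.*2 | is_sym_brauer d]| = a n.*2 /\
  forall (R : comUnitRingType) (delta : R), delta \is a GRing.unit ->
  [/\ (forall f : elt R n.*2, inSBr f -> inBr f) /\
      inSBr (bone R n.*2),
      (forall f g : elt R n.*2, inSBr f -> inSBr g -> inSBr (f + g)),
      (forall (c : R) (f : elt R n.*2), inSBr f -> inSBr (c *: f)),
      (forall f g : elt R n.*2, inSBr f -> inSBr g -> inSBr (bmul delta f g))
    & exists b : 'I_(a n.*2) -> elt R n.*2,
        [/\ (forall i, inSBr (b i)),
            (forall c : 'I_(a n.*2) -> R,
              \sum_i c i *: b i = 0 -> forall i, c i = 0)
          & (forall f : elt R n.*2, inSBr f ->
              exists c : 'I_(a n.*2) -> R, f = \sum_i c i *: b i)]].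
Proof.
split; first exact: card_sym_brauer.
move=> R delta _; split.
- by split; [apply: SBr_sub_Br | apply: SBr_one].
- exact: SBr_add.
- exact: SBr_scale.
- exact: SBr_mul.
- exact: SBr_basis (card_sym_brauer n).
Qed.
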